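(* Let $X=(X_0,X_1,\dots)$ be a Markov chain on $[0,\infty)$ with transition kernel $T(\cdot\mid x)$ such that $\int_0^\infty|y-x|^3T(dy\mid x)<\infty$ for all $x\ge0$, and let $\mu_k(x)=\int_0^\infty(y-x)^kT(dy\mid x)$ for $k=1,2,3$. Assume $\mu_2(x)>0$ for all sufficiently large $x$. Assume there is a function $\psi_1$ such that for all sufficiently large $x$, $\mu_1(x)\le\frac{\mu_2(x)}{2x}[1+\psi_1(x)]$, and $\lim_{x\to\infty}(\log x)\psi_1(x)=0$. Assume also $\lim_{x\to\infty}\frac{\log x}{x}\frac{\mu_3(x)}{\mu_2(x)}=0$. Then the function $f_0(x)=\log(\log(e+x))$, $x\ge0$, is superharmonic on $[m,\infty)$ for all $m$ large enough, i.e. there is $m$ such that $\int_0^\infty f_0(y)T(dy\mid x)\le f_0(x)$ for all $x\ge m$. *)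

From HB Require Import structures.
From mathcomp Require Import all_boot all_order all_algebra.
From mathcomp Require Import all_classical all_reals all_analysis.
Set Implicit Arguments. Unset Strict Implicit. Unset Printing Implicit Defensive.
Import Order.TTheory GRing.Theory Num.Theory.
Import numFieldNormedType.Exports.
Local Open Scope classical_set_scope.
Local Open Scope ring_scope.

(* k-th moment of the one-step increment from x:
   mu_k(x) = \int_0^oo (y - x)^k T(dy | x)   (real-valued via fine; it is
   finite under the third-moment hypothesis of the theorem). *)
Definition moment (R : realType) (T : R.-pker R ~> R) (k : nat) (x : R) : R :=
  fine (\int[T x]_(y in `[0%R, +oo[%classic) ((y - x) ^+ k)%:E)%E.

Definition f0 (R : realType) (x : R) : R := ln (ln (expR 1 + x)).

From HB Require Import structures.
From mathcomp Require Import all_boot all_order all_algebra.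
From mathcomp Require Import all_classical all_reals all_analysis.
From mathcomp Require Import measurable_realfun ring lra.
Set Implicit Arguments. Unset Strict Implicit. Unset Printing Implicit Defensive.
Import Order.TTheory GRing.Theory Num.Theory.
Import numFieldNormedType.Exports.
Local Open Scope classical_set_scope.
Local Open Scope ring_scope.

(* Since the third derivative of f0 is nonincreasing on [0, oo), the cubic
   Taylor polynomial of f0 at x bounds f0 from above on [0, oo).  Integrating
   it against T(.|x) bounds the mean of f0 by f0 x plus the drift
   f0'(x) mu1 + f0''(x)/2 mu2 + f0'''(x)/6 mu3.  With u = e + x and L = ln u,
   the bound on mu1 turns the drift into mu2 / (2 x (u L)^2) times
   e L + psi1 u L + (2 L^2 + 3 L + 2) (mu3/mu2) x / (3 u L) - x,
   and for large x each of the first three terms is at most x/4. *)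

Lemma derive_ge0_le (R : realType) (a : R) (g dg : R -> R) :
    (forall z, a <= z -> is_derive z 1 g (dg z)) ->
  forall u v, a <= u -> u <= v -> (forall z, u <= z <= v -> 0 <= dg z) ->
  g u <= g v.
Proof.
move=> g_deriv u v au uv dg_ge0.
have deriv_uv z : z \in `]u, v[ -> is_derive z 1 g (dg z).
  by rewrite in_itv /= => /andP[uz _]; apply: g_deriv; lra.
have g_cont : {within `[u, v], continuous g}.
  apply: continuous_in_subspaceT => z; rewrite inE /= in_itv /= => /andP[uz _].
  have [dz _] := g_deriv z ltac:(lra).
  exact/differentiable_continuous/derivable1_diffP.
have [c] := MVT_segment uv deriv_uv g_cont.
rewrite in_itv /= => /andP[uc cv] gvu.
by rewrite -subr_ge0 gvu mulr_ge0 ?dg_ge0 ?uc ?subr_ge0.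
Qed.

Section zero_at_point.
Variables (R : realType) (a x : R) (g dg : R -> R).
Hypothesis g_deriv : forall z, a <= z -> is_derive z 1 g (dg z).
Hypotheses (ax : a <= x) (gx : g x = 0).

Lemma ge0_derive_sign_change :
    (forall z, a <= z <= x -> dg z <= 0) -> (forall z, x <= z -> 0 <= dg z) ->
  forall y, a <= y -> 0 <= g y.
Proof.
move=> dg_le0 dg_ge0 y ay; have [xy|yx] := leP x y.
  by rewrite -gx; apply: (derive_ge0_le g_deriv) => // z /andP[xz _]; apply: dg_ge0.
have Ng_deriv z : a <= z -> is_derive z 1 (- g) (- dg z).
  by move=> az; have := g_deriv az; apply: is_deriveN.
rewrite -oppr_le0 -oppr0 -gx.
apply: (derive_ge0_le Ng_deriv ay (ltW yx)) => z /andP[yz zx].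
by rewrite oppr_ge0 dg_le0 // zx (le_trans ay yz).
Qed.

Lemma sign_derive_ge0 : (forall z, a <= z -> 0 <= dg z) ->
  forall y, a <= y -> (x <= y -> 0 <= g y) /\ (y <= x -> g y <= 0).
Proof.
move=> dg_ge0 y ay; split=> [xy|yx]; rewrite -gx.
  by apply: (derive_ge0_le g_deriv) => // z /andP[xz _]; apply/dg_ge0/(le_trans ax).
by apply: (derive_ge0_le g_deriv) => // z /andP[yz _]; apply/dg_ge0/(le_trans ay).
Qed.

End zero_at_point.

Section taylor3.
Variables (R : realType) (a : R) (g0 g1 g2 g3 : R -> R).
Hypotheses (g0_deriv : forall z, a <= z -> is_derive z 1 g0 (g1 z))
           (g1_deriv : forall z, a <= z -> is_derive z 1 g1 (g2 z))
           (g2_deriv : forall z, a <= z -> is_derive z 1 g2 (g3 z)).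
Hypothesis g3_nincr : forall s t, a <= s -> s <= t -> g3 t <= g3 s.

Lemma taylor3_le x y : a <= x -> a <= y ->
  g0 y <= g0 x + g1 x * (y - x) + g2 x / 2 * (y - x) ^+ 2 + g3 x / 6 * (y - x) ^+ 3.
Proof.
move=> ax ay.
pose r2 z := g2 x + g3 x * (z - x) - g2 z.
pose r1 z := g1 x + g2 x * (z - x) + g3 x / 2 * (z - x) ^+ 2 - g1 z.
pose r0 z := g0 x + g1 x * (z - x) + g2 x / 2 * (z - x) ^+ 2
             + g3 x / 6 * (z - x) ^+ 3 - g0 z.
(* Each remainder is the derivative of the next: r2 >= 0 because g3 is
   nonincreasing, so r1 has the sign of z - x, so r0 is minimal at x. *)
have r2_ge0 : forall z, a <= z -> 0 <= r2 z.
  apply: (@ge0_derive_sign_change _ a x r2 (fun z => g3 x - g3 z) _ ax).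
  - move=> z /g2_deriv dz.
    by apply: is_derive_eq; rewrite /GRing.scale /=; ring.
  - by rewrite /r2 /= subrr; ring.
  - by move=> z /andP[az zx]; rewrite subr_le0 g3_nincr.
  - by move=> z xz; rewrite subr_ge0 g3_nincr.
have r1_sign : forall z, a <= z -> (x <= z -> 0 <= r1 z) /\ (z <= x -> r1 z <= 0).
  apply: (@sign_derive_ge0 _ a x r1 r2 _ ax _ r2_ge0).
  - move=> z /g1_deriv dz.
    by apply: is_derive_eq; rewrite /r2 /GRing.scale /=; field.
  - by rewrite /r1 /= subrr; ring.
suff : 0 <= r0 y by rewrite subr_ge0.
apply: (@ge0_derive_sign_change _ a x r0 r1 _ ax _ _ _ y ay).
- move=> z /g0_deriv dz.
  by apply: is_derive_eq; rewrite /r1 /GRing.scale /=; field.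
- by rewrite /r0 /= subrr; ring.
- by move=> z /andP[az zx]; have [_] := r1_sign z az; apply.
- by move=> z xz; have [] := r1_sign z (le_trans ax xz); move/(_ xz).
Qed.

End taylor3.

Section f0_derivatives.
Variable R : realType.
Implicit Types z s t : R.

Definition f0' z := ((expR 1 + z) * ln (expR 1 + z))^-1.
Definition f0'' z := - (ln (expR 1 + z) + 1) * f0' z ^+ 2.
Definition f0''' z := (2 * ln (expR 1 + z) ^+ 2 + 3 * ln (expR 1 + z) + 2) * f0' z ^+ 3.

Lemma expR1D_gt0 z : 0 <= z -> 0 < expR 1 + z.
Proof. by move=> z0; rewrite (lt_le_trans (expR_gt0 1)) // lerDl. Qed.

Lemma ln_expR1D_ge1 z : 0 <= z -> 1 <= ln (expR 1 + z).
Proof.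
move=> z0; rewrite -[leLHS](expRK 1) ler_ln ?posrE ?expR_gt0 ?expR1D_gt0 //.
by rewrite lerDl.
Qed.

Lemma ln_expR1D_gt0 z : 0 <= z -> 0 < ln (expR 1 + z).
Proof. by move=> /ln_expR1D_ge1; apply: lt_le_trans. Qed.

Lemma is_derive_ln_expR1D z : 0 <= z ->
  is_derive z 1 (fun w => ln (expR 1 + w)) (expR 1 + z)^-1.
Proof.
move=> z0; have d_shift : is_derive z 1 (fun w => expR 1 + w) 1.
  by apply: is_derive_eq; rewrite add0r mulr1.
by have := is_derive1_comp (is_derive1_ln (expR1D_gt0 z0)) d_shift; rewrite mulr1.
Qed.

Lemma is_derive_f0 z : 0 <= z -> is_derive z 1 (@f0 R) (f0' z).
Proof.
move=> z0; have dL := is_derive_ln_expR1D z0.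
have := is_derive1_comp (g := fun w => ln (expR 1 + w))
  (is_derive1_ln (ln_expR1D_gt0 z0)) dL.
by rewrite /f0' invfM mulrC.
Qed.

Lemma is_derive_f0' z : 0 <= z -> is_derive z 1 f0' (f0'' z).
Proof.
move=> z0; have dL := is_derive_ln_expR1D z0.
have u0 := expR1D_gt0 z0; have L0 := ln_expR1D_gt0 z0.
have uL0 : (expR 1 + z) * ln (expR 1 + z) != 0 by rewrite mulf_neq0 // gt_eqF.
rewrite {1}/f0'; apply: is_derive_eq; rewrite /GRing.scale /= /f0'' /f0'.
by field; rewrite !gt_eqF.
Qed.

Lemma is_derive_f0'' z : 0 <= z -> is_derive z 1 f0'' (f0''' z).
Proof.
move=> z0; have dL := is_derive_ln_expR1D z0; have d1 := is_derive_f0' z0.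
have u0 := expR1D_gt0 z0; have L0 := ln_expR1D_gt0 z0.
rewrite {1}/f0''; apply: is_derive_eq; rewrite /GRing.scale /= /f0''' /f0'' /f0'.
by field; rewrite !gt_eqF.
Qed.

Lemma f0'''E z : 0 <= z -> f0''' z =
  (2 * (ln (expR 1 + z))^-1 + 3 * (ln (expR 1 + z))^-2 + 2 * (ln (expR 1 + z))^-3)
  * (expR 1 + z)^-3.
Proof.
move=> z0; have u0 := expR1D_gt0 z0; have L0 := ln_expR1D_gt0 z0.
by rewrite /f0''' /f0'; field; rewrite !gt_eqF.
Qed.

Lemma f0'''_nincr s t : 0 <= s -> s <= t -> f0''' t <= f0''' s.
Proof.
move=> s0 st; have t0 := le_trans s0 st.
rewrite f0'''E // f0'''E //.
have Vle (p q : R) (n : nat) : 0 < p -> p <= q -> q ^- n <= p ^- n.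
  move=> p0 pq; have q0 := lt_le_trans p0 pq.
  rewrite lef_pV2 ?posrE ?exprn_gt0 //.
  by apply: lerXn2r => //; rewrite nnegrE; exact: ltW.
have Ls : ln (expR 1 + s) <= ln (expR 1 + t).
  by rewrite ler_ln ?posrE ?expR1D_gt0 ?lerD2l.
have us : expR 1 + s <= expR 1 + t by rewrite lerD2l.
have Ls0 := ln_expR1D_gt0 s0; have Lt0 := ln_expR1D_gt0 t0.
have := Vle _ _ 1%N Ls0 Ls; rewrite !expr1 => L1.
have L2 := Vle _ _ 2%N Ls0 Ls; have L3 := Vle _ _ 3%N Ls0 Ls.
apply: ler_pM; last exact: Vle (expR1D_gt0 s0) us.
- by rewrite !addr_ge0 // mulr_ge0 // invr_ge0 ?exprn_ge0 // ltW.
- by rewrite invr_ge0 exprn_ge0 // ltW // expR1D_gt0.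
- by rewrite !lerD ?ler_pM2l.
Qed.

Lemma f0_ge0 z : 0 <= z -> 0 <= f0 z.
Proof. by move=> /ln_expR1D_ge1; apply: ln_ge0. Qed.

Lemma measurable_f0 (D : set R) : measurable D -> measurable_fun D (@f0 R).
Proof.
move=> mD; apply: measurableT_comp; first exact: measurable_ln.
apply: measurableT_comp; first exact: measurable_ln.
exact: measurable_funD.
Qed.

End f0_derivatives.

Lemma expR1_ge2 (R : realType) : 2 <= expR 1 :> R.
Proof. by have := expR_ge1Dx (1 : R). Qed.

Section log_bounds.
Variable R : realType.
Implicit Types x : R.

Lemma ln_lt_2sqrt x : 0 < x -> ln x < 2 * Num.sqrt x.
Proof.
move=> x0; have s0 : 0 < Num.sqrt x by rewrite sqrtr_gt0.
rewrite -{1}(sqr_sqrtr (ltW x0)) lnXn // mulr2n.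
have := ln_sublinear s0; lra.
Qed.

Lemma ln_expR1D_le x : 2 * expR 1 <= x -> ln (expR 1 + x) <= 2 * ln x.
Proof.
move=> ex; have e2 := expR1_ge2 R.
have x0 : 0 < x by lra.
rewrite mulr_natl mulr2n -lnM ?posrE // ler_ln ?posrE ?mulr_gt0 //; last lra.
nra.
Qed.

Lemma expR1_ln_expR1D_le x :
  (16 * expR 1) ^+ 2 <= x -> expR 1 * ln (expR 1 + x) <= x / 4.
Proof.
move=> ex; have e2 := expR1_ge2 R.
have ex2 : 2 * expR 1 <= x by apply: le_trans ex; rewrite expr2; nra.
have x0 : 0 < x by lra.
have s_ge : 16 * expR 1 <= Num.sqrt x.
  by have := ler_wsqrtr ex; rewrite sqrtr_sqr ger0_norm //; lra.
have ss : Num.sqrt x * Num.sqrt x = x by rewrite -expr2 sqr_sqrtr // ltW.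
have L_le : ln (expR 1 + x) <= 4 * Num.sqrt x.
  by have := ln_expR1D_le ex2; have := ln_lt_2sqrt x0; lra.
have : expR 1 * ln (expR 1 + x) <= expR 1 * (4 * Num.sqrt x).
  by rewrite ler_pM2l ?expR_gt0.
nra.
Qed.

End log_bounds.

Lemma drift_bracket_le (R : realFieldType) (c x L l psi r : R) :
    0 < x -> 0 <= c -> c <= x -> 1 <= L -> L <= 2 * l -> c * L <= x / 4 ->
    l * psi <= 1 / 20 -> l * `|r| <= x / 20 ->
  c * L + psi * ((c + x) * L) + (2 * L ^+ 2 + 3 * L + 2) * r * x / (3 * ((c + x) * L))
    <= x.
Proof.
move=> x0 c0 cx L1 Ll cL lpsi lr.
have L0 : 0 < L by lra.
have uL0 : 0 < (c + x) * L by rewrite mulr_gt0 //; lra.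
have psi_term : psi * ((c + x) * L) <= x / 4.
  have [psi0|psi0] := leP psi 0.
    by rewrite (le_trans (mulr_le0_ge0 psi0 (ltW uL0))) //; lra.
  have : (c + x) * L <= (2 * x) * (2 * l) by apply: ler_pM; lra.
  rewrite -(ler_pM2l psi0); nra.
have r_term : (2 * L ^+ 2 + 3 * L + 2) * r * x / (3 * ((c + x) * L)) <= x / 4.
  rewrite ler_pdivrMr; last exact: mulr_gt0.
  have P7 : 2 * L ^+ 2 + 3 * L + 2 <= 7 * L ^+ 2 by rewrite expr2; nra.
  have r0 := normr_ge0 r.
  have Pr : (2 * L ^+ 2 + 3 * L + 2) * r <= 7 * L ^+ 2 * `|r|.
    apply: le_trans (_ : (2 * L ^+ 2 + 3 * L + 2) * `|r| <= _).
      by rewrite ler_pM2l ?ler_norm // (lt_le_trans L0) //; rewrite expr2; nra.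
    by rewrite ler_wpM2r.
  have Lr : L * `|r| <= 2 * l * `|r| by rewrite ler_wpM2r.
  have Lrx : L * `|r| <= x / 10 by lra.
  have : 7 * L ^+ 2 * `|r| <= 7 / 10 * L * x.
    by have := ler_wpM2l (ltW L0) Lrx; rewrite expr2; lra.
  move=> h; have xcL : 0 <= x * c * L by rewrite !mulr_ge0 // ltW.
  nra.
lra.
Qed.

Section f0_drift.
Variable R : realType.

Lemma f0_drift_factor (x m2 m3 psi : R) : 0 < x -> m2 != 0 ->
  let L := ln (expR 1 + x) in
  f0' x * (m2 / (2 * x) * (1 + psi)) + f0'' x / 2 * m2 + f0''' x / 6 * m3 =
  m2 * f0' x ^+ 2 / (2 * x) *
  (expR 1 * L + psi * ((expR 1 + x) * L)
   + (2 * L ^+ 2 + 3 * L + 2) * (m3 / m2) * x / (3 * ((expR 1 + x) * L)) - x).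
Proof.
move=> x0 m2_neq0 L.
have u0 := expR1D_gt0 (ltW x0); have L0 : 0 < L := ln_expR1D_gt0 (ltW x0).
by rewrite /f0''' /f0'' /f0' -/L; field; rewrite m2_neq0 !gt_eqF.
Qed.

Lemma f0_drift_le0 (x m1 m2 m3 psi : R) :
    (16 * expR 1) ^+ 2 <= x -> 0 < m2 -> m1 <= m2 / (2 * x) * (1 + psi) ->
    `|ln x * psi| <= 1 / 20 -> `|ln x / x * (m3 / m2)| <= 1 / 20 ->
  f0' x * m1 + f0'' x / 2 * m2 + f0''' x / 6 * m3 <= 0.
Proof.
move=> x_big m2_gt0 m1_le psi_small r_small.
have e2 := expR1_ge2 R.
have ex : 2 * expR 1 <= x by apply: le_trans x_big; rewrite expr2; nra.
have x0 : 0 < x by lra.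
have lnx0 : 0 < ln x by apply: ln_gt0; lra.
have w0 : 0 < f0' x by rewrite invr_gt0 mulr_gt0 ?expR1D_gt0 ?ln_expR1D_gt0 ?ltW.
apply: (@le_trans _ _
  (f0' x * (m2 / (2 * x) * (1 + psi)) + f0'' x / 2 * m2 + f0''' x / 6 * m3)).
  by rewrite !lerD2r ler_pM2l.
rewrite f0_drift_factor ?gt_eqF //.
apply: mulr_ge0_le0.
  apply: divr_ge0; last lra.
  exact: mulr_ge0 (ltW m2_gt0) (exprn_ge0 _ (ltW w0)).
rewrite subr_le0; apply: (drift_bracket_le (l := ln x)).
- exact: x0.
- exact/ltW/expR_gt0.
- lra.
- exact/ln_expR1D_ge1/ltW.
- exact: ln_expR1D_le.
- exact: expR1_ln_expR1D_le.
- exact: le_trans (ler_norm _) psi_small.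
- move: r_small; rewrite normrM (ger0_norm (divr_ge0 (ltW lnx0) (ltW x0))).
  by rewrite mulrAC ler_pdivrMr //; lra.
Qed.

End f0_drift.

Lemma pker_itv_ge0_eq1 (R : realType) (T : R.-pker R ~> R) (x : R) :
  T x `]-oo, 0%R[%classic = 0%E -> T x `[0%R, +oo[%classic = 1%E.
Proof.
move=> T0; rewrite -setCitvl; have := @prob_kernel _ _ _ _ _ T x.
rewrite -(setvU `]-oo, 0%R[%classic) measureU ?setICl //= ?T0 ?adde0 //.
exact: measurableC.
Qed.

Section cubic_moments.
Variables (R : realType) (mu : {measure set R -> \bar R}) (x : R).
Let D := `[0%R, +oo[%classic : set R.
Hypothesis muD : mu D = 1%E.
Hypothesis third_moment : (\int[mu]_(y in D) (`|y - x| ^+ 3)%:E < +oo)%E.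
Local Notation mom k := (fine (\int[mu]_(y in D) ((y - x) ^+ k)%:E)%E).

Let mD : measurable D. Proof. exact: measurable_itv. Qed.

Lemma integrable_cst (c : R) : mu.-integrable D (cst c%:E).
Proof.
apply/integrableP; split; first exact: measurable_cst.
by rewrite integral_cst // muD mule1 ltry.
Qed.

Lemma integrable_powB (k : nat) : (k <= 3)%N ->
  mu.-integrable D (fun y => ((y - x) ^+ k)%:E).
Proof.
move=> k3.
have mB : measurable_fun D (fun y => y - x) by apply: measurable_funB.
have int3 : mu.-integrable D (fun y => (`|y - x| ^+ 3)%:E).
  apply/integrableP; split.
    by apply/measurable_EFinP; apply/measurable_funX/measurableT_comp.
  by under eq_integral do rewrite gee0_abs ?lee_fin ?exprn_ge0 //.
apply: (le_integrable mD) (integrableD mD (integrable_cst 1) int3).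
  by apply/measurable_EFinP; apply: measurable_funX.
move=> y _; rewrite /= lee_fin normrX.
have a0 := normr_ge0 (y - x); set a := `|y - x| in a0 *.
rewrite ger0_norm ?addr_ge0 ?exprn_ge0 //.
have a3 := exprn_ge0 3 a0.
have [a1|a1] := leP a 1.
  have : a ^+ k <= 1 by rewrite exprn_ile1.
  lra.
have : a ^+ k <= a ^+ 3 by rewrite ler_eXn2l.
lra.
Qed.

Lemma momentE (k : nat) : (k <= 3)%N ->
  (\int[mu]_(y in D) ((y - x) ^+ k)%:E)%E = (mom k)%:E.
Proof. by move=> k3; rewrite fineK // integrable_fin_num // integrable_powB. Qed.

Lemma integral_le_moments (f : R -> R) (c0 c1 c2 c3 : R) :
    measurable_fun D f -> (forall y, 0 <= y -> 0 <= f y) ->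
    (forall y, 0 <= y ->
       f y <= c0 + c1 * (y - x) + c2 * (y - x) ^+ 2 + c3 * (y - x) ^+ 3) ->
  (\int[mu]_(y in D) (f y)%:E <=
     (c0 + c1 * mom 1 + c2 * mom 2 + c3 * mom 3)%:E)%E.
Proof.
move=> mf f_ge0 f_le.
have iZ c k : (k <= 3)%N -> mu.-integrable D (fun y => (c * (y - x) ^+ k)%:E).
  move=> k3; under eq_fun do rewrite EFinM.
  by apply: integrableZl => //; apply: integrable_powB.
have int_p : (\int[mu]_(y in D)
    (c0 + c1 * (y - x) ^+ 1 + c2 * (y - x) ^+ 2 + c3 * (y - x) ^+ 3)%:E =
    (c0 + c1 * mom 1 + c2 * mom 2 + c3 * mom 3)%:E)%E.
  under eq_integral do rewrite !EFinD.
  rewrite integralD ?integrableD ?iZ ?integrable_cst //.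
  rewrite integralD ?integrableD ?iZ ?integrable_cst //.
  rewrite integralD ?iZ ?integrable_cst //.
  rewrite integral_cst // muD mule1.
  have intZ c k : (k <= 3)%N ->
      (\int[mu]_(y in D) (c * (y - x) ^+ k)%:E = (c * mom k)%:E)%E.
    move=> k3; under eq_integral do rewrite EFinM.
    by rewrite integralZl ?integrable_powB // momentE.
  by rewrite !intZ // -!EFinD.
have D_ge0 y : D y -> 0 <= y by rewrite /D /= in_itv /= andbT.
rewrite -int_p ge0_le_integral //.
- by move=> y /D_ge0 y0; rewrite lee_fin f_ge0.
- exact/measurable_EFinP.
- apply/measurable_EFinP.
  by do ![apply: measurable_funD | apply: measurable_funM | apply: measurable_funX
         | apply: measurable_funB].
- by move=> y /D_ge0 y0; rewrite lee_fin expr1 f_le.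
Qed.
End cubic_moments.

Lemma near_pinfty_ge (R : realType) (P : R -> Prop) :
  (\forall x \near +oo, P x) -> \forall m \near +oo, forall x, m <= x -> P x.
Proof.
move=> [M [M_real MP]]; exists M; split => // m Mm x mx.
exact/MP/(lt_le_trans Mm mx).
Qed.

Theorem theorem4p4 (R : realType) (T : R.-pker R ~> R) (psi1 : R -> R)
  (* the chain lives on [0, oo): from any x >= 0 it stays in [0, oo) a.s. *)
  (Hstate : forall x : R, 0 <= x -> T x `]-oo, 0%R[%classic = 0%E)
  (* finite third absolute moment *)
  (H3 : forall x : R, 0 <= x ->
     (\int[T x]_(y in `[0%R, +oo[%classic) (`|y - x| ^+ 3)%:E < +oo)%E)
  (Hmu2 : \forall x \near +oo, 0 < moment T 2 x)
  (Hmu1 : \forall x \near +oo,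
     moment T 1 x <= moment T 2 x / (2 * x) * (1 + psi1 x))
  (Hpsi1 : (fun x => ln x * psi1 x) @ +oo --> (0 : R))
  (Hmu3 : (fun x => ln x / x * (moment T 3 x / moment T 2 x)) @ +oo --> (0 : R)) :
  \forall m \near +oo, forall x : R, m <= x ->
    (\int[T x]_(y in `[0%R, +oo[%classic) (f0 y)%:E <= (f0 x)%:E)%E.
Proof.
apply: near_pinfty_ge.
have eps : (0 : R) < 1 / 20 by [].
near=> x.
have x_big : (16 * expR 1) ^+ 2 <= x by near: x; apply: nbhs_pinfty_ge; rewrite num_real.
have x0 : 0 <= x := le_trans (sqr_ge0 _) x_big.
have f0_taylor y : 0 <= y -> f0 y <=
    f0 x + f0' x * (y - x) + f0'' x / 2 * (y - x) ^+ 2 + f0''' x / 6 * (y - x) ^+ 3.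
  exact: (taylor3_le (@is_derive_f0 R) (@is_derive_f0' R) (@is_derive_f0'' R)
                     (@f0'''_nincr R) x0).
apply: le_trans (integral_le_moments (pker_itv_ge0_eq1 (Hstate x x0)) (H3 x x0)
  (measurable_f0 (measurable_itv _)) (@f0_ge0 R) f0_taylor) _.
rewrite lee_fin -[leRHS]addr0 -!addrA lerD2l !addrA.
apply: (f0_drift_le0 (psi := psi1 x)) => //.
- by near: x; exact: Hmu2.
- by near: x; exact: Hmu1.
- by near: x; exact: cvgr0_norm_le Hpsi1 _ eps.
- by near: x; exact: cvgr0_norm_le Hmu3 _ eps.
Unshelve. all: end_near.
Qed.
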